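(* Let $\gamma>0$. There exists a sequence of positive numbers $(\alpha_n)_{n\ge2}$ such that, with the convention $\alpha_1=0$, $$\sup_{n\ge2}\Big\{(1+2\nu_n)\Big(p_n+\frac{|q_n|}{\alpha_n}+|q_{n-1}|\,\alpha_{n-1}\Big)\Big\}<1 .$$
   Context: For $\gamma>0$ and integers $n\ge1$ define $\nu_n=\nu_n(\gamma)=(-1)^n\frac{\Gamma(2\gamma)\Gamma(n+\gamma)}{\Gamma(\gamma)\Gamma(n+2\gamma)}$, $p_n=p_n(\gamma)=\frac{2n(n-1)+(6n-4)\gamma+6\gamma^2}{(2n+3\gamma)(2n+3\gamma-2)}=\frac12+\frac{-\gamma+\frac32\gamma^2}{(2n+3\gamma)(2n+3\gamma-2)}$, $q_n=q_n(\gamma)=-\frac{1}{2n+3\gamma}\sqrt{\frac{(n+3\gamma-1)(n+1)(n+\gamma)}{(2n+3\gamma+1)(2n+3\gamma-1)}}$. (These arise from the Jacobi polynomials orthogonal for Beta$(\gamma,2\gamma)$: $p_n$ and $q_n$ are the diagonal and normalized off-diagonal entries of multiplication by $1-u$.) *)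

From Stdlib Require Import Reals Lra Lia.
Open Scope R_scope.

(* Gamma(n+g)/Gamma(g) * Gamma(2g)/Gamma(n+2g)
   = prod_{k=0}^{n-1} (g+k)/(2g+k)   (functional equation Gamma(x+1)=x Gamma(x)).
   Stdlib has no Gamma function, so we write out this ratio directly. *)
Fixpoint gamma_ratio (g : R) (n : nat) : R :=
  match n with
  | O => 1
  | S m => gamma_ratio g m * ((g + INR m) / (2 * g + INR m))
  end.

Definition nu (g : R) (n : nat) : R := (-1) ^ n * gamma_ratio g n.

Definition p_ (g : R) (n : nat) : R :=
  (2 * INR n * (INR n - 1) + (6 * INR n - 4) * g + 6 * g ^ 2)
  / ((2 * INR n + 3 * g) * (2 * INR n + 3 * g - 2)).

Definition q_ (g : R) (n : nat) : R :=
  - (1 / (2 * INR n + 3 * g)) *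
    sqrt (((INR n + 3 * g - 1) * (INR n + 1) * (INR n + g))
          / ((2 * INR n + 3 * g + 1) * (2 * INR n + 3 * g - 1))).

(* Write M_n = 1 - (1 + 2 r_n) p_n for the gap left at even indices.  Since r_n
   decreases, r_n <= r_2 and M_n >= margin_lb g := g/((4+3g)(2g+1)) > 0 (n >= 2).
   Weights are chosen in pairs: alpha_n = 4|q_n| / M_n for even n and
   alpha_n = M_(n+1) / (4|q_n|) for odd n.  Then
   - at even n both coupling terms equal M_n/4 (the backward one vanishes at
     n = 2), so the quantity is (1+2r_n)(p_n + M_n/2) = 1 - M_n (1 - 2r_n)/2,
     and 1 - 2 r_n >= 1 - 2 r_2 = g/(2g+1);
   - at odd n the quantity is (1 - 2r_n)(p_n + 4 q_n^2/M_(n+1) + 4 q_(n-1)^2/M_(n-1)).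
     Writing X = 1 - 2 r_n in [1 - 2 r_3, 1], both gaps M_(n+-1) are affine in X,
     so each coupling term is a linear-fractional function of X, bounded by its
     values at the endpoints; substituting n = 3 + 2j, every resulting estimate is
     a rational inequality in (g, j) whose difference is a quotient of
     polynomials with nonnegative coefficients.  The bounds add up to 97/100.
   The constant is max(1 - margin_lb g * g/(2(2g+1)), 97/100) < 1. *)
From Stdlib Require Import Reals Lra Lia.
Open Scope R_scope.

Ltac nonneg_poly := match goal with
 | |- 0 <= _ + _ => apply Rplus_le_le_0_compat; [nonneg_poly | nonneg_poly]
 | |- 0 <= _ * _ => apply Rmult_le_pos; [nonneg_poly | nonneg_poly]
 | |- 0 <= _ ^ _ => apply pow_le; nonneg_poly
 | _ => first [assumption | lra]
 end.
Ltac pos_poly := match goal with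
 | |- 0 < _ + _ => first [ apply Rplus_lt_le_0_compat; [pos_poly | nonneg_poly]
                         | apply Rplus_le_lt_0_compat; [nonneg_poly | pos_poly] ]
 | |- 0 < _ * _ => apply Rmult_lt_0_compat; [pos_poly | pos_poly]
 | |- 0 < _ ^ _ => apply pow_lt; pos_poly
 | _ => first [assumption | lra]
 end.

Lemma Rdiv_nonneg a b : 0 <= a -> 0 < b -> 0 <= a / b.
Proof.
intros Ha Hb; unfold Rdiv; apply Rmult_le_pos; [lra | left; apply Rinv_0_lt_compat; lra].
Qed.

(* A certificate for a <= b (resp. 0 < e) is an expression of b - a (resp. e)
   as an explicit quotient of polynomials with nonnegative coefficients. *)
Lemma le_by_certificate a b c : b - a = c -> 0 <= c -> a <= b.
Proof. intros; lra. Qed.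

Lemma pos_by_certificate e c : e = c -> 0 < c -> 0 < e.
Proof. intros; lra. Qed.

Ltac field_nonzero := repeat split; apply Rgt_not_eq; unfold Rgt;
  first [lra | nra | pos_poly].

Ltac certify_le c := apply (le_by_certificate _ _ c);
  [field; field_nonzero | apply Rdiv_nonneg; [nonneg_poly | pos_poly]].

Ltac certify_pos c := apply (pos_by_certificate _ c);
  [field; field_nonzero | apply Rdiv_lt_0_compat; [pos_poly | pos_poly]].

Lemma Rdiv_le_cross a b c d : 0 < b -> 0 < d -> a * d <= c * b -> a / b <= c / d.
Proof.
intros Hb Hd H.
assert (E : a / b - c / d = (a * d - c * b) * / (b * d)) by (field; lra).
assert (0 < / (b * d)) by (apply Rinv_0_lt_compat; nra).
assert ((a * d - c * b) * / (b * d) <= 0) by nra.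
lra.
Qed.

Lemma linear_fractional_le_max a b X0 X : 0 <= X0 -> X0 <= X -> X <= 1 ->
  0 < a + b -> 0 < a + b * X0 -> X / (a + b * X) <= Rmax (1 / (a + b)) (X0 / (a + b * X0)).
Proof.
intros H0 H1 H2 H3 H4.
assert (HX : 0 < a + b * X) by (destruct (Rle_dec 0 b); nra).
destruct (Rle_dec 0 a).
- apply Rle_trans with (1 / (a + b)); [|apply Rmax_l].
  apply Rdiv_le_cross; nra.
- apply Rle_trans with (X0 / (a + b * X0)); [|apply Rmax_r].
  apply Rdiv_le_cross; nra.
Qed.

Definition p_real (g k : R) : R :=
  (2*k*(k-1) + (6*k-4)*g + 6*g^2) / ((2*k+3*g)*(2*k+3*g-2)).
Definition q_sq_real (g k : R) : R :=
  ((k+3*g-1)*(k+1)*(k+g)) / ((2*k+3*g+1)*(2*k+3*g-1)) / (2*k+3*g)^2.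

Definition gap (g r k : R) : R := 1 - (1 + 2*r) * p_real g k.

Lemma p_real_pos g k : 0 < g -> 1 <= k -> 0 < p_real g k.
Proof.
intros Hg Hk. unfold p_real. apply Rdiv_lt_0_compat; [nra|]. apply Rmult_lt_0_compat; lra.
Qed.

Lemma q_sq_real_pos g k : 0 < g -> 1 <= k -> 0 < q_sq_real g k.
Proof.
intros Hg Hk. unfold q_sq_real.
apply Rdiv_lt_0_compat; [apply Rdiv_lt_0_compat|]; pos_poly.
Qed.

(* Even-index gap at its worst ratio r_2 = (g+1)/(2(2g+1)): for every k >= 2,
   1 - (3g+2)/(2g+1) p_k >= mu. *)
Lemma even_gap_certificate g k : 0 < g -> 2 <= k ->
  g / ((4+3*g)*(2*g+1)) <= 1 - (3*g+2)/(2*g+1) * p_real g k.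
Proof.
intros Hg Hk. set (t := k - 2). replace k with (2 + t) by (unfold t; ring).
assert (Ht : 0 <= t) by (unfold t; lra). clearbody t. unfold p_real.
certify_le ((((((16*g + 36*g^2) + (18*g^3 + 12*g*t)) + ((4*g*t^2 + 30*g^2*t) + (6*g^2*t^2 + 18*g^3*t))))/((((32 + (160*g + 282*g^2)) + (207*g^3 + (54*g^4 + 48*t))) + ((16*t^2 + (180*g*t + 44*g*t^2)) + (204*g^2*t + (24*g^2*t^2 + 72*g^3*t))))))).
Qed.

(* Estimates at odd indices n = 3 + 2j.  Endpoint X = 1 corresponds to r = 0,
   endpoint X = X3 := 3g/(2(2g+1)) = 1 - 2 r_3 to r = r_3. *)
Section OddIndex.
Variables g j : R.
Hypothesis Hg : 0 < g.
Hypothesis Hj : 0 <= j.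
Let n := 3 + 2*j.
Let X3 := 3*g/(2*(2*g+1)).

Lemma odd_diagonal_bound : p_real g n <= 1/2 + g^2/(6*(1+g)^2).
Proof. unfold n, p_real. certify_le (((((6*g + (27*g^2 + 18*g^3)) + (40*g^2*j + (16*g^2*j^2 + 24*g^3*j))))/((1)*((6 + (12*g + 6*g^2)))*((6 + (3*g + 4*j)))*((4 + (3*g + 4*j)))))). Qed.

(* Denominators of the forward coupling term (gap at n + 1). *)
Lemma forward_gap_pos_end1 : 0 < 1 - p_real g (n+1).
Proof. unfold n, p_real. certify_pos (((((24 + (22*g + 3*g^2)) + (28*j + (8*j^2 + 12*g*j))))/((1)*((8 + (3*g + 4*j)))*((6 + (3*g + 4*j)))))). Qed.

Lemma forward_gap_pos_endX3 : 0 < 1 - (1 + (1 - X3)*((g+n)/(2*g+n))) * p_real g (n+1).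
Proof. unfold n, X3, p_real. certify_pos ((((((276*g + 402*g^2) + (174*g^3 + (18*g^4 + 460*g*j))) + ((256*g*j^2 + 48*g*j^3) + (452*g^2*j + (128*g^2*j^2 + 96*g^3*j)))))/((1)*((2 + 4*g))*((3 + (2*g + 2*j)))*((8 + (3*g + 4*j)))*((6 + (3*g + 4*j)))))). Qed.

(* Denominators of the backward coupling term (gap at n - 1). *)
Lemma backward_gap_pos_end1 : 0 < 1 - p_real g (n-1).
Proof. unfold n, p_real. certify_pos (((((4 + (10*g + 3*g^2)) + (12*j + (8*j^2 + 12*g*j))))/((1)*((4 + (3*g + 4*j)))*((2 + (3*g + 4*j)))))). Qed.

Lemma backward_gap_pos_endX3 :
  0 < 1 - (1 + (1 - X3)*((2*g+n-1)/(g+n-1))) * p_real g (n-1).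
Proof. unfold n, X3, p_real. certify_pos ((((((24*g + 48*g^2) + (18*g^3 + 80*g*j)) + ((104*g*j^2 + 48*g*j^3) + (124*g^2*j + (88*g^2*j^2 + 36*g^3*j)))))/((1)*((2 + 4*g))*((2 + (1*g + 2*j)))*((4 + (3*g + 4*j)))*((2 + (3*g + 4*j)))))). Qed.

(* Forward coupling term 4 q_n^2 X / M_(n+1) at both endpoints. *)
Lemma forward_term_end1 : 4 * q_sq_real g n * (1 / (1 - p_real g (n+1))) <= 1/(4*(1+g)).
Proof. unfold n, p_real, q_sq_real. certify_le (((((((11808 + (20712*g + 14292*g^2)) + ((9150*g^3 + 5877*g^4) + (1998*g^5 + 243*g^6))) + ((55632*j + (107680*j^2 + 108736*j^3)) + ((60288*j^4 + 17408*j^5) + (2048*j^6 + 99008*g*j)))) + (((167968*g*j^2 + (132480*g*j^3 + 49664*g*j^4)) + ((7168*g*j^5 + 69716*g^2*j) + (95848*g^2*j^2 + 51712*g^2*j^3))) + ((9728*g^2*j^4 + (31788*g^3*j + 28032*g^3*j^2)) + ((7296*g^3*j^3 + 10044*g^4*j) + (3816*g^4*j^2 + 1404*g^5*j))))))/((1)*((4 + 4*g))*((7 + (3*g + 4*j)))*((5 + (3*g + 4*j)))*((6 + (3*g + 4*j)))*((6 + (3*g + 4*j)))*(((24 + (22*g + 3*g^2)) + (28*j + (8*j^2 + 12*g*j))))))). Qed.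

Lemma forward_term_endX3 :
  4 * q_sq_real g n * (X3 / (1 - (1 + (1 - X3)*((g+n)/(2*g+n))) * p_real g (n+1)))
  <= 1/(4*(1+g)).
Proof. unfold n, X3, p_real, q_sq_real. certify_le ((((((((363744*g + 1699920*g^2) + (3027384*g^3 + (2887884*g^4 + 1806804*g^5))) + ((857880*g^6 + (302076*g^7 + 64476*g^8)) + (5832*g^9 + (1713312*g*j + 3495168*g*j^2)))) + (((3983104*g*j^3 + 2727424*g*j^4) + (1118720*g*j^5 + (253952*g*j^6 + 24576*g*j^7))) + ((7591104*g^2*j + (14383872*g^2*j^2 + 14912512*g^2*j^3)) + (9091840*g^2*j^4 + (3243008*g^2*j^5 + 622592*g^2*j^6))))) + ((((49152*g^2*j^7 + 12463656*g^3*j) + (20915712*g^3*j^2 + (18323104*g^3*j^3 + 8842240*g^3*j^4))) + ((2229248*g^3*j^5 + (229376*g^3*j^6 + 10589544*g^4*j)) + (14897856*g^4*j^2 + (10145088*g^4*j^3 + 3363840*g^4*j^4)))) + (((436224*g^4*j^5 + 5493288*g^5*j) + (5914752*g^5*j^2 + (2718816*g^5*j^3 + 454656*g^5*j^4))) + ((1903608*g^6*j + (1336320*g^6*j^2 + 301248*g^6*j^3)) + (416016*g^7*j + (138240*g^7*j^2 + 41472*g^8*j)))))))/((1)*((4 + 4*g))*((7 + (3*g + 4*j)))*((5 + (3*g + 4*j)))*((6 + (3*g + 4*j)))*((6 + (3*g + 4*j)))*((2 + 4*g))*((((276*g + 402*g^2) + (174*g^3 + (18*g^4 + 460*g*j)))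 + ((256*g*j^2 + 48*g*j^3) + (452*g^2*j + (128*g^2*j^2 + 96*g^3*j)))))))). Qed.

(* Backward coupling term 4 q_(n-1)^2 X / M_(n-1) at both endpoints. *)
Lemma backward_term_end1 :
  4 * q_sq_real g (n-1) * (1 / (1 - p_real g (n-1))) <= (21/100 + 7/10*g)/(1+g)^2.
Proof. unfold n, p_real, q_sq_real. certify_le ((((((((960 + 31296*g) + (177900*g^2 + 419310*g^3)) + ((512289*g^4 + 343656*g^5) + (120123*g^6 + 17010*g^7))) + (((15808*j + 91584*j^2) + (238912*j^3 + 304512*j^4)) + ((185344*j^5 + 43008*j^6) + (331968*g*j + (1268352*g*j^2 + 2266880*g*j^3))))) + ((((2035456*g*j^4 + 879616*g*j^5) + (143360*g*j^6 + 1382356*g^2*j)) + ((3803272*g^2*j^2 + 4748032*g^2*j^3) + (2740736*g^2*j^4 + (593920*g^2*j^5 + 2372852*g^3*j)))) + (((4550128*g^3*j^2 + 3593728*g^3*j^3) + (1003520*g^3*j^4 + 2004900*g^4*j)) + ((2409864*g^4*j^2 + 908160*g^4*j^3) + (834228*g^5*j + (474480*g^5*j^2 + 137160*g^6*j)))))))/((100)*((1 + (2*g + 1*g^2)))*((5 + (3*g + 4*j)))*((3 + (3*g + 4*j)))*((4 + (3*g + 4*j)))*((4 + (3*g + 4*j)))*(((4 + (10*g + 3*g^2)) + (12*j + (8*j^2 + 12*g*j))))))). Qed.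

Lemma backward_term_endX3 :
  4 * q_sq_real g (n-1) * (X3 / (1 - (1 + (1 - X3)*((2*g+n-1)/(g+n-1))) * p_real g (n-1)))
  <= (21/100 + 7/10*g)/(1+g)^2.
Proof. unfold n, X3, p_real, q_sq_real. certify_le ((((((((2880*g + (40608*g^2 + 185652*g^3)) + (407232*g^4 + (492975*g^5 + 351792*g^6))) + ((152793*g^7 + (39528*g^8 + 4860*g^9)) + (9984*g*j + (115200*g*j^2 + 569472*g*j^3)))) + (((1202880*g*j^4 + (1254528*g*j^5 + 642048*g*j^6)) + (129024*g*j^7 + (513216*g^2*j + 3109280*g^2*j^2))) + ((8882560*g^2*j^3 + (13163520*g^2*j^4 + 10482176*g^2*j^5)) + ((4252672*g^2*j^6 + 688128*g^2*j^7) + (3125928*g^3*j + 15855356*g^3*j^2))))) + ((((36000904*g^3*j^3 + (42129408*g^3*j^4 + 26045696*g^3*j^5)) + (7862272*g^3*j^6 + (860160*g^3*j^7 + 8140722*g^4*j))) + ((34813364*g^4*j^2 + (62873920*g^4*j^3 + 55663104*g^4*j^4)) + ((23724032*g^4*j^5 + 3850240*g^4*j^6) + (11405790*g^5*j + 39795348*g^5*j^2)))) + (((54128856*g^5*j^3 + (32294016*g^5*j^4 + 7050240*g^5*j^5)) + (9341934*g^6*j + (24935628*g^6*j^2 + 22749888*g^6*j^3))) + ((6846720*g^6*j^4 + (4527810*g^7*j + 8191440*g^7*j^2)) + ((3756960*g^7*j^3 + 1214136*g^8*j) + (1112400*g^8*j^2 + 139320*g^9*j)))))))/((25)*((1 +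 (2*g + 1*g^2)))*((5 + (3*g + 4*j)))*((3 + (3*g + 4*j)))*((4 + (3*g + 4*j)))*((4 + (3*g + 4*j)))*((2 + 4*g))*((((24*g + 48*g^2) + (18*g^3 + 80*g*j)) + ((104*g*j^2 + 48*g*j^3) + (124*g^2*j + (88*g^2*j^2 + 36*g^3*j)))))))). Qed.

End OddIndex.

Lemma odd_bounds_sum g : 0 < g ->
  1/2 + g^2/(6*(1+g)^2) + 1/(4*(1+g)) + (21/100 + 7/10*g)/(1+g)^2 <= 97/100.
Proof. intros Hg. certify_le ((((6 + (12*g + 182*g^2)) + (534*g^3 + (540*g^4 + 182*g^5))) / ((25)*((6 + (12*g + 6*g^2)))*((4 + 4*g))*((1 + (2*g + 1*g^2)))))). Qed.

Lemma coupling_term_bound Q L p X3 X B : 0 <= Q -> 0 <= X3 -> X3 <= X -> X <= 1 ->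
  0 < 1 - p -> 0 < 1 - (1 + (1 - X3) * L) * p ->
  Q * (1 / (1 - p)) <= B -> Q * (X3 / (1 - (1 + (1 - X3) * L) * p)) <= B ->
  Q * (X / (1 - (1 + (1 - X) * L) * p)) <= B.
Proof.
intros HQ H0 H1 H2 Hp1 HpX3 B1 BX3.
set (a := 1 - (1 + L) * p). set (b := L * p).
assert (Eaff : forall Y, 1 - (1 + (1 - Y) * L) * p = a + b * Y) by (intros; unfold a, b; ring).
assert (E1 : 1 - p = a + b) by (unfold a, b; ring).
rewrite Eaff; rewrite Eaff in HpX3, BX3; rewrite E1 in Hp1, B1.
apply Rle_trans with (Q * Rmax (1 / (a + b)) (X3 / (a + b * X3))).
- apply Rmult_le_compat_l; [exact HQ|]. now apply linear_fractional_le_max.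
- unfold Rmax; destruct (Rle_dec _ _); assumption.
Qed.

(* The odd-index estimate, for a real index N >= 3 and a ratio 0 < r <= r_3;
   the ratios at N + 1 and N - 1 are obtained from r by the recursion of
   gamma_ratio. *)
Lemma odd_index_bound g N r : 0 < g -> 3 <= N -> 0 < r -> r <= (g+2)/(4*(2*g+1)) ->
  (1 - 2*r) * (p_real g N + 4 * q_sq_real g N / gap g (r*(g+N)/(2*g+N)) (N+1)
                          + 4 * q_sq_real g (N-1) / gap g (r*(2*g+N-1)/(g+N-1)) (N-1))
  <= 97/100.
Proof.
intros Hg HN Hr Hr3.
set (j := (N-3)/2). assert (Hj : 0 <= j) by (unfold j; lra).
assert (HNj : N = 3 + 2*j) by (unfold j; lra). clearbody j.
set (X3 := 3*g/(2*(2*g+1))). set (X := 1 - 2*r).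
assert (HX3 : X3 <= X).
{ assert (1 - 2*((g+2)/(4*(2*g+1))) = X3) by (unfold X3; field; lra). unfold X; lra. }
assert (HX1 : X <= 1) by (unfold X; lra).
assert (HX30 : 0 <= X3) by (left; unfold X3; apply Rdiv_lt_0_compat; lra).
assert (Gf : gap g (r*(g+N)/(2*g+N)) (N+1)
             = 1 - (1 + (1-X)*((g+N)/(2*g+N))) * p_real g (N+1)) by (unfold gap, X; field; lra).
assert (Gb : gap g (r*(2*g+N-1)/(g+N-1)) (N-1)
             = 1 - (1 + (1-X)*((2*g+N-1)/(g+N-1))) * p_real g (N-1)) by (unfold gap, X; field; lra).
assert (Qf : 0 < q_sq_real g N) by (apply q_sq_real_pos; lra).
assert (Qb : 0 < q_sq_real g (N-1)) by (apply q_sq_real_pos; lra).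
assert (forward : 4 * q_sq_real g N * (X / (1 - (1 + (1-X)*((g+N)/(2*g+N))) * p_real g (N+1)))
                  <= 1/(4*(1+g))).
{ subst N; apply coupling_term_bound with X3; try lra.
  - apply forward_gap_pos_end1; assumption.
  - apply forward_gap_pos_endX3; assumption.
  - apply forward_term_end1; assumption.
  - apply forward_term_endX3; assumption. }
assert (backward : 4 * q_sq_real g (N-1)
                     * (X / (1 - (1 + (1-X)*((2*g+N-1)/(g+N-1))) * p_real g (N-1)))
                   <= (21/100 + 7/10*g)/(1+g)^2).
{ subst N; apply coupling_term_bound with X3; try lra.
  - apply backward_gap_pos_end1; assumption.
  - apply backward_gap_pos_endX3; assumption.
  - apply backward_term_end1; assumption.
  - apply backward_term_endX3; assumption. }
assert (diagonal : p_real g N <= 1/2 + g^2/(6*(1+g)^2)) by (subst N; now apply odd_diagonal_bound).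
pose proof (odd_bounds_sum g Hg) as total.
pose proof (p_real_pos g N Hg ltac:(lra)) as Hp.
rewrite Gf, Gb. fold X.
assert (X * p_real g N <= p_real g N) by (unfold X; nra).
unfold Rdiv in *; lra.
Qed.

Lemma gamma_ratio_pos g n : 0 < g -> 0 < gamma_ratio g n.
Proof.
intros Hg. induction n as [|n IH]; simpl; [lra|].
pose proof (pos_INR n). apply Rmult_lt_0_compat; [exact IH | apply Rdiv_lt_0_compat; lra].
Qed.

Lemma gamma_ratio_antitone g k n : 0 < g -> (k <= n)%nat -> gamma_ratio g n <= gamma_ratio g k.
Proof.
intros Hg H. induction H as [|n _ IH]; [lra|].
apply Rle_trans with (gamma_ratio g n); [|exact IH]. simpl.
pose proof (pos_INR n). pose proof (gamma_ratio_pos g n Hg).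
assert (E : (g + INR n)/(2*g + INR n) = 1 - g/(2*g + INR n)) by (field; lra).
assert (0 < g/(2*g + INR n)) by (apply Rdiv_lt_0_compat; lra).
rewrite E; nra.
Qed.

Lemma gamma_ratio_2 g : 0 < g -> gamma_ratio g 2 = (g+1)/(2*(2*g+1)).
Proof. intros Hg. simpl. field. lra. Qed.

Lemma gamma_ratio_3 g : 0 < g -> gamma_ratio g 3 = (g+2)/(4*(2*g+1)).
Proof. intros Hg. simpl. field. repeat split; lra. Qed.

Lemma gamma_ratio_succ g n :
  gamma_ratio g (S n) = gamma_ratio g n * (g + INR n) / (2*g + INR n).
Proof. simpl. unfold Rdiv. ring. Qed.

Lemma gamma_ratio_pred g n : 0 < g ->
  gamma_ratio g n = gamma_ratio g (S n) * (2*g + INR (S n) - 1) / (g + INR (S n) - 1).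
Proof.
intros Hg. rewrite gamma_ratio_succ, S_INR. pose proof (pos_INR n). field. lra.
Qed.

Lemma Rabs_q_sq g k : 0 < g -> (1 <= k)%nat -> Rabs (q_ g k) * Rabs (q_ g k) = q_sq_real g (INR k).
Proof.
intros Hg Hk. assert (HK : 1 <= INR k) by (apply le_INR in Hk; exact Hk).
rewrite <- Rabs_mult, Rabs_pos_eq by nra.
unfold q_, q_sq_real.
match goal with |- context [sqrt ?Z] => set (W := Z) end.
assert (HW : 0 <= W) by (left; unfold W; apply Rdiv_lt_0_compat; pos_poly).
transitivity ((1/(2*INR k+3*g))^2 * (sqrt W * sqrt W)); [ring|].
rewrite sqrt_sqrt by exact HW. unfold W. field. repeat split; lra.
Qed.

Lemma Rabs_q_pos g k : 0 < g -> (1 <= k)%nat -> 0 < Rabs (q_ g k).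
Proof.
intros Hg Hk. assert (HK : 1 <= INR k) by (apply le_INR in Hk; exact Hk).
pose proof (q_sq_real_pos g (INR k) Hg HK) as H. rewrite <- Rabs_q_sq in H by assumption.
destruct (Rabs_pos (q_ g k)) as [H1|H1]; [exact H1|]. rewrite <- H1 in H. lra.
Qed.

Definition margin (g : R) (n : nat) : R := gap g (gamma_ratio g n) (INR n).

Definition margin_lb (g : R) : R := g / ((4+3*g)*(2*g+1)).

Lemma margin_lb_pos g : 0 < g -> 0 < margin_lb g.
Proof. intros Hg. unfold margin_lb. apply Rdiv_lt_0_compat; pos_poly. Qed.

(* M_n >= margin_lb g for n >= 2, since r_n <= r_2. *)
Lemma margin_ge g n : 0 < g -> (2 <= n)%nat -> margin_lb g <= margin g n.
Proof.
intros Hg Hn.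
assert (HN : 2 <= INR n) by (apply le_INR in Hn; exact Hn).
assert (Hr : gamma_ratio g n <= (g+1)/(2*(2*g+1)))
  by (rewrite <- gamma_ratio_2 by exact Hg; now apply gamma_ratio_antitone).
pose proof (even_gap_certificate g (INR n) Hg HN) as E.
replace ((3*g+2)/(2*g+1)) with (1 + 2*((g+1)/(2*(2*g+1)))) in E by (field; lra).
pose proof (p_real_pos g (INR n) Hg ltac:(lra)).
unfold margin, margin_lb, gap. nra.
Qed.

Definition alpha (g : R) (n : nat) : R :=
  if (n <=? 1)%nat then 0
  else if Nat.even n then 4 * Rabs (q_ g n) / margin g n
  else margin g (S n) / (4 * Rabs (q_ g n)).

Lemma alpha_even g n : (2 <= n)%nat -> Nat.Even n -> alpha g n = 4 * Rabs (q_ g n) / margin g n.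
Proof.
intros Hn He. unfold alpha.
replace (n <=? 1)%nat with false by (symmetry; apply Nat.leb_gt; lia).
now rewrite (proj2 (Nat.even_spec n) He).
Qed.

Lemma alpha_odd g n : (2 <= n)%nat -> Nat.Odd n -> alpha g n = margin g (S n) / (4 * Rabs (q_ g n)).
Proof.
intros Hn Ho. unfold alpha.
replace (n <=? 1)%nat with false by (symmetry; apply Nat.leb_gt; lia).
now rewrite <- Nat.negb_odd, (proj2 (Nat.odd_spec n) Ho).
Qed.

Lemma alpha_pos g n : 0 < g -> (2 <= n)%nat -> 0 < alpha g n.
Proof.
intros Hg Hn. pose proof (Rabs_q_pos g n Hg ltac:(lia)).
destruct (Nat.Even_or_Odd n) as [He|Ho].
- rewrite alpha_even by assumption.
  pose proof (margin_ge g n Hg Hn). pose proof (margin_lb_pos g Hg).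
  apply Rdiv_lt_0_compat; lra.
- rewrite alpha_odd by assumption.
  pose proof (margin_ge g (S n) Hg ltac:(lia)). pose proof (margin_lb_pos g Hg).
  apply Rdiv_lt_0_compat; lra.
Qed.

Definition dominance (g : R) (n : nat) : R :=
  (1 + 2 * nu g n) * (p_ g n + Rabs (q_ g n) / alpha g n
                      + Rabs (q_ g (n - 1)) * alpha g (n - 1)%nat).

(* Even n: the two coupling terms are each at most M_n/4, giving
   1 - M_n (1 - 2 r_n)/2 <= 1 - margin_lb g * g/(2(2g+1)). *)
Lemma dominance_even g n : 0 < g -> (2 <= n)%nat -> Nat.Even n ->
  dominance g n <= 1 - margin_lb g * (g/(2*g+1)) / 2.
Proof.
intros Hg Hn He.
assert (Hsign : nu g n = gamma_ratio g n)
  by (destruct He as [k ->]; unfold nu; rewrite pow_1_even; ring).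
pose proof (Rabs_q_pos g n Hg ltac:(lia)) as Hq.
pose proof (margin_ge g n Hg Hn) as HM. pose proof (margin_lb_pos g Hg).
assert (forward : Rabs (q_ g n) / alpha g n = margin g n / 4)
  by (rewrite alpha_even by assumption; field; lra).
assert (backward : 0 <= Rabs (q_ g (n-1)) * alpha g (n-1)%nat <= margin g n / 4).
{ destruct (Nat.eq_dec n 2) as [->|Hn2].
  - change (alpha g (2-1)%nat) with 0. rewrite Rmult_0_r. lra.
  - assert (Ho : Nat.Odd (n-1)) by (destruct He as [k Hk]; exists (k-1)%nat; lia).
    rewrite alpha_odd by (assumption || lia). replace (S (n-1)) with n by lia.
    pose proof (Rabs_q_pos g (n-1) Hg ltac:(lia)).
    replace (Rabs (q_ g (n-1)) * (margin g n / (4 * Rabs (q_ g (n-1))))) with (margin g n / 4)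
      by (field; lra). lra. }
assert (Hr : gamma_ratio g n <= (g+1)/(2*(2*g+1)))
  by (rewrite <- gamma_ratio_2 by exact Hg; now apply gamma_ratio_antitone).
assert (Hw : g/(2*g+1) <= 1 - 2 * gamma_ratio g n).
{ replace (g/(2*g+1)) with (1 - 2*((g+1)/(2*(2*g+1)))) by (field; lra). lra. }
assert (Hw0 : 0 < g/(2*g+1)) by (apply Rdiv_lt_0_compat; lra).
assert (Hprod : margin_lb g * (g/(2*g+1)) <= margin g n * (1 - 2 * gamma_ratio g n))
  by (apply Rmult_le_compat; lra).
pose proof (gamma_ratio_pos g n Hg).
assert (HMdef : margin g n = 1 - (1 + 2 * gamma_ratio g n) * p_ g n) by reflexivity.
unfold dominance. rewrite Hsign, forward.
set (M := margin g n) in *. set (P := p_ g n) in *.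
set (B := Rabs (q_ g (n - 1)) * alpha g (n - 1)) in *.
nra.
Qed.

Lemma dominance_odd g n : 0 < g -> (2 <= n)%nat -> Nat.Odd n -> dominance g n <= 97/100.
Proof.
intros Hg Hn Ho.
destruct n as [|m]; [lia|].
assert (Hm : (2 <= m)%nat) by (destruct Ho as [k Hk]; lia).
assert (Hsign : nu g (S m) = - gamma_ratio g (S m)).
{ destruct Ho as [k Hk]. unfold nu. rewrite Hk, Nat.add_1_r, pow_1_odd. ring. }
assert (Hme : Nat.Even m) by (destruct Ho as [k Hk]; exists k; lia).
pose proof (Rabs_q_pos g (S m) Hg ltac:(lia)). pose proof (Rabs_q_pos g m Hg ltac:(lia)).
pose proof (margin_ge g (S (S m)) Hg ltac:(lia)). pose proof (margin_ge g m Hg Hm).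
pose proof (margin_lb_pos g Hg).
assert (forward : Rabs (q_ g (S m)) / alpha g (S m)
                  = 4 * q_sq_real g (INR (S m)) / margin g (S (S m))).
{ rewrite alpha_odd, <- Rabs_q_sq by (assumption || lia). field; lra. }
assert (backward : Rabs (q_ g m) * alpha g m = 4 * q_sq_real g (INR m) / margin g m).
{ rewrite alpha_even, <- Rabs_q_sq by (assumption || lia). field; lra. }
set (N := INR (S m)).
assert (HN : 3 <= N) by (unfold N; apply le_INR in Hm; rewrite S_INR; simpl in Hm; lra).
assert (Mf : margin g (S (S m))
             = gap g (gamma_ratio g (S m) * (g+N)/(2*g+N)) (N+1))
  by (unfold margin, N; now rewrite gamma_ratio_succ, (S_INR (S m))).
assert (Mb : margin g m
             = gap g (gamma_ratio g (S m) * (2*g+N-1)/(g+N-1)) (N-1)).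
{ unfold margin, N. rewrite <- gamma_ratio_pred by exact Hg. rewrite S_INR. f_equal; ring. }
unfold dominance. replace (S m - 1)%nat with m by lia.
rewrite Hsign, forward, backward, Mf, Mb.
replace (INR m) with (N - 1) by (unfold N; rewrite S_INR; ring).
replace (1 + 2 * - gamma_ratio g (S m)) with (1 - 2 * gamma_ratio g (S m)) by ring.
apply odd_index_bound; [exact Hg | exact HN | now apply gamma_ratio_pos |].
rewrite <- gamma_ratio_3 by exact Hg. apply gamma_ratio_antitone; [exact Hg | lia].
Qed.

Theorem propositionA1 (g : R) (hg : 0 < g) :
  exists alpha : nat -> R,
    (forall n : nat, (2 <= n)%nat -> 0 < alpha n) /\
    alpha 1%nat = 0 /\
    exists c : R, c < 1 /\
      forall n : nat, (2 <= n)%nat ->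
        (1 + 2 * nu g n) *
          (p_ g n + Rabs (q_ g n) / alpha n
                  + Rabs (q_ g (n - 1)) * alpha (n - 1)%nat) <= c.
Proof.
exists (alpha g). split; [|split; [reflexivity|]].
{ intros n Hn. now apply alpha_pos. }
exists (Rmax (1 - margin_lb g * (g/(2*g+1)) / 2) (97/100)). split.
- apply Rmax_lub_lt; [|lra].
  pose proof (margin_lb_pos g hg).
  assert (0 < g/(2*g+1)) by (apply Rdiv_lt_0_compat; lra).
  pose proof (Rmult_lt_0_compat (margin_lb g) (g/(2*g+1))). lra.
- intros n Hn. fold (dominance g n).
  destruct (Nat.Even_or_Odd n) as [He|Ho].
  + eapply Rle_trans; [now apply dominance_even | apply Rmax_l].
  + eapply Rle_trans; [now apply dominance_odd | apply Rmax_r].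
Qed.
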